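(* Let $G=(V,E)$ be a connected locally finite graph with measure $\mu$ and edge weights $w$ as described in the context, and let $m\ge1$ be an integer. Suppose $\mu(x)\ge\mu_0>0$ for all $x\in V$, and let $\mathcal{P}=(p_0,p_1,\dots,p_m)$ with $1\le p_j\le+\infty$ for $j=0,\dots,m$. Then there exists a constant $C$ depending only on $\mu_0$ and $\mathcal{P}$ such that for every $u\in W^{m,\mathcal{P}}(V)$, $$\||\nabla^ju|\|_\infty\le C\|u\|_{W^{m,\mathcal{P}}(V)}\quad\text{for all } j=0,\dots,m.$$ Moreover, for $j\in\{0,\dots,m\}$ such that $1\le p_j<+\infty$, for every $q\in[p_j,+\infty)$ one has $\||\nabla^ju|\|_q\le C\|u\|_{W^{m,\mathcal{P}}(V)}$ for all $u\in W^{m,\mathcal{P}}(V)$, where $C$ depends only on $\mu_0$, $p_j$ and $q$.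
   Context: $G=(V,E)$ is a connected graph with infinitely many vertices in which every vertex has finitely many neighbours; $y\sim x$ means $xy\in E$. A measure $\mu:V\to(0,+\infty)$ is given, and each edge $xy\in E$ carries a weight $w_{xy}>0$. For $u:V\to\mathbb{R}$ define $\Delta u(x)=\frac{1}{\mu(x)}\sum_{y\sim x}w_{xy}(u(y)-u(x))$ and $|\nabla u|(x)=\big(\frac{1}{2\mu(x)}\sum_{y\sim x}w_{xy}(u(y)-u(x))^2\big)^{1/2}$. Integrals are $\int_V f\,d\mu=\sum_{x\in V}\mu(x)f(x)$; $\|f\|_p=(\int_V|f|^pd\mu)^{1/p}$ for $1\le p<\infty$ and $\|f\|_\infty=\sup_{x\in V}|f(x)|$. Set $\Delta^0u=u$, $\Delta^ku=\Delta(\Delta^{k-1}u)$, and $|\nabla^j u|=|\Delta^k u|$ if $j=2k$, $|\nabla^ju|=|\nabla(\Delta^ku)|$ if $j=2k+1$. For $\mathcal{P}=(p_0,\dots,p_m)$ with $p_j\ge1$, $W^{m,\mathcal{P}}(V)=\{u:V\to\mathbb{R}:\sum_{j=0}^m\||\nabla^ju|\|_{p_j}<+\infty\}$ with norm $\|u\|_{W^{m,\mathcal{P}}(V)}=\sum_{j=0}^m\||\nabla^ju|\|_{p_j}$. *)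

From mathcomp Require Import all_boot all_order all_algebra.
From mathcomp Require Import all_classical all_reals all_analysis.
From Stdlib Require Import Relations.
Set Implicit Arguments. Unset Strict Implicit. Unset Printing Implicit Defensive.
Import Order.TTheory GRing.Theory Num.Theory.
Local Open Scope classical_set_scope.
Local Open Scope ring_scope.

Definition weighted_graph (R : realType) (V : choiceType)
  (adj : V -> V -> Prop) (w : V -> V -> R) (mu : V -> R) : Prop :=
  (forall x y, adj x y -> adj y x) /\
  (forall x, finite_set [set y | adj x y]) /\
  (forall x y, clos_refl_trans V adj x y) /\
  infinite_set [set: V] /\
  (forall x y, adj x y -> w x y = w y x /\ 0 < w x y) /\
  (forall x, 0 < mu x).

Section Ops.
Variables (R : realType) (V : choiceType) (adj : V -> V -> Prop)
  (w : V -> V -> R) (mu : V -> R).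

Definition glap (u : V -> R) : V -> R :=
  fun x => (mu x)^-1 * \sum_(y \in [set y | adj x y]) w x y * (u y - u x).

Definition ggrad (u : V -> R) : V -> R :=
  fun x => Num.sqrt ((2 * mu x)^-1 *
             \sum_(y \in [set y | adj x y]) w x y * (u y - u x) ^+ 2).

Definition gnabla (j : nat) (u : V -> R) : V -> R :=
  if odd j then ggrad (iter j./2 glap u)
  else fun x => `| iter j./2 glap u x |.

Definition lpnorm (p : \bar R) (f : V -> R) : \bar R :=
  match p with
  | r%:E => ((\esum_(x in [set: V]) (mu x * `|f x| `^ r)%:E)
              `^ r^-1)%E
  | +oo%E => ereal_sup (range (fun x => (`|f x|)%:E))
  | -oo%E => 0%E
  end.

Definition sobnorm (m : nat) (P : 'I_m.+1 -> \bar R) (u : V -> R) : \bar R :=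
  (\sum_(j < m.+1) lpnorm (P j) (gnabla j u))%E.

End Ops.

(* Since mu >= mu0 > 0, a single term of the weighted p-sum already controls
   the function pointwise: mu0 |f x|^p <= ||f||_p^p, whence
   ||f||_oo <= mu0^(-1/p) ||f||_p.  Writing |f|^q = |f|^(q-p) |f|^p and bounding
   the first factor by ||f||_oo^(q-p) then gives
   ||f||_q <= mu0^(-(1/p - 1/q)) ||f||_p for p <= q.  Every term of the Sobolev
   norm is bounded by the whole norm, and for p >= 1 the constant mu0^(-1/p) is
   at most 1 + mu0^-1, uniformly in p. *)

From mathcomp Require Import all_boot all_order all_algebra.
From mathcomp Require Import all_classical all_reals all_analysis.
From mathcomp Require Import lra.
Set Implicit Arguments. Unset Strict Implicit. Unset Printing Implicit Defensive.
Import Order.TTheory GRing.Theory Num.Theory.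
Local Open Scope classical_set_scope.
Local Open Scope ring_scope.

Section PowR.
Variable R : realType.
Implicit Types a b c e m p q s t : R.

Lemma powR_le1D b e : 0 <= b -> 0 <= e <= 1 -> b `^ e <= 1 + b.
Proof.
move=> b0 /andP[e0 e1].
apply: (@le_trans _ _ ((1 + b) `^ e)).
  by apply: ge0_ler_powR; rewrite ?nnegrE; lra.
by apply: le_trans (ler_powR _ e1) _; rewrite ?powRr1; lra.
Qed.

Lemma le_powRV_of_mul_powR m a p s :
  0 < m -> 0 < p -> 0 <= a -> m * a `^ p <= s -> a <= (m^-1 * s) `^ p^-1.
Proof.
move=> m0 p0 a0 mas.
have -> : a = (a `^ p) `^ p^-1 by rewrite -powRrM mulfV ?gt_eqF ?powRr1.
have s0 : 0 <= s by apply: le_trans mas; rewrite mulr_ge0 ?powR_ge0 ?ltW.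
apply: ge0_ler_powR; rewrite ?nnegrE ?powR_ge0 ?mulr_ge0 ?invr_ge0 ?(ltW m0) ?(ltW p0) //.
by rewrite ler_pdivlMl.
Qed.

Lemma powR_interp c t p q : 0 <= c -> 0 <= t -> 0 < p <= q ->
  ((c * t) `^ (q - p) * t `^ p) `^ q^-1 = c `^ (1 - p / q) * t.
Proof.
move=> c0 t0 /andP[p0 pq]; have q0 : q != 0 by rewrite gt_eqF //; lra.
rewrite (powRM _ c0 t0) -mulrA -powRD ?subrK ?(negbTE q0) //.
rewrite powRM ?powR_ge0 // -!powRrM mulfV // powRr1 //.
by rewrite mulrBl mulfV.
Qed.
End PowR.

Section Esum.
Variable R : realType.

Lemma esumZl_le (T : choiceType) (S : set T) (k : R) (a : T -> \bar R) :
  0 <= k -> (forall i, 0 <= a i)%E ->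
  (\esum_(i in S) (k%:E * a i) <= k%:E * \esum_(i in S) a i)%E.
Proof.
move=> k0 a0; apply: ge_ereal_sup => _ [X XS <-].
rewrite -ge0_mule_fsumr //; apply: lee_wpmul2l; first by rewrite lee_fin.
by apply: esum_ge; exists X.
Qed.

Lemma esum_ge_term (T : choiceType) (a : T -> \bar R) x :
  (forall i, 0 <= a i)%E -> (a x <= \esum_(i in [set: T]) a i)%E.
Proof.
move=> a0; apply: esum_ge; exists [set x]; first by split => //; exact: finite_set1.
by rewrite fsbig_set1.
Qed.
End Esum.

Section LpNorm.
Variables (R : realType) (V : choiceType) (mu : V -> R).
Implicit Types (f : V -> R) (p q : R).

Let psum p f := \esum_(x in [set: V]) (mu x * `|f x| `^ p)%:E.

Let lpnormE p f : lpnorm mu p%:E f = (psum p f `^ p^-1)%E.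
Proof. by []. Qed.

Lemma lpnorm_ge0 (P : \bar R) f : [set: V] !=set0 -> (0 <= lpnorm mu P f)%E.
Proof.
move=> [x _]; case: P => [p| |] //=; first exact: poweR_ge0.
apply: le_trans (ereal_sup_ubound (x := (`|f x|)%:E) _); first by rewrite lee_fin.
by exists x.
Qed.

Variable mu0 : R.
Hypotheses (mu0_gt0 : 0 < mu0) (mu0_le : forall x, mu0 <= mu x).

Let mu_ge0 x : 0 <= mu x. Proof. exact: le_trans (ltW mu0_gt0) (mu0_le x). Qed.

Let psum_term_ge0 p f x : (0 <= (mu x * `|f x| `^ p)%:E)%E.
Proof. by rewrite lee_fin mulr_ge0 ?powR_ge0. Qed.

Let psum_ge0 p f : (0 <= psum p f)%E.
Proof. exact: esum_ge0. Qed.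

Lemma le_powRV_psum p f s x : 0 < p -> psum p f = s%:E ->
  `|f x| <= (mu0^-1 * s) `^ p^-1.
Proof.
move=> p0 fs; apply: le_powRV_of_mul_powR => //.
have := esum_ge_term x (psum_term_ge0 p f); rewrite -/(psum p f) fs lee_fin.
by apply: le_trans; rewrite ler_wpM2r ?powR_ge0.
Qed.

Lemma lpnorm_pointwise p f x : 0 < p ->
  ((`|f x|)%:E <= (mu0^-1 `^ p^-1)%:E * lpnorm mu p%:E f)%E.
Proof.
move=> p0; have c0 : 0 < mu0^-1 `^ p^-1 by rewrite powR_gt0 ?invr_gt0.
rewrite lpnormE; case fs: (psum p f) => [s| |].
- have s0 : 0 <= s by have := psum_ge0 p f; rewrite fs lee_fin.
  rewrite poweR_EFin -EFinM lee_fin -powRM ?invr_ge0 ?(ltW mu0_gt0) //.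
  exact: le_powRV_psum p0 fs.
- by rewrite poweRyr ?invr_neq0 ?gt_eqF // gt0_muley ?leey ?lte_fin.
- by have := psum_ge0 p f; rewrite fs.
Qed.

Lemma lpnorm_infty_le p f : 0 < p ->
  (lpnorm mu +oo f <= (mu0^-1 `^ p^-1)%:E * lpnorm mu p%:E f)%E.
Proof.
by move=> p0; apply: ge_ereal_sup => _ [x _ <-]; exact: lpnorm_pointwise.
Qed.

Lemma psum_le_sup_powR p q f A : 0 < p <= q -> (forall x, `|f x| <= A) ->
  (psum q f <= (A `^ (q - p))%:E * psum p f)%E.
Proof.
move=> /andP[p0 pq] fA.
apply: le_trans (esumZl_le _ (powR_ge0 _ _) (psum_term_ge0 p f)).
apply: le_esum => x _; rewrite -EFinM lee_fin.
have -> : `|f x| `^ q = `|f x| `^ (q - p) * `|f x| `^ p.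
  by rewrite -powRD ?subrK // implybE gt_eqF ?orbT // (lt_le_trans p0).
rewrite mulrCA ler_wpM2r ?mulr_ge0 ?powR_ge0 //.
by apply: ge0_ler_powR; rewrite ?nnegrE ?subr_ge0 // (le_trans _ (fA x)).
Qed.

Lemma lpnorm_le_lpnorm p q f : 0 < p <= q ->
  (lpnorm mu q%:E f <= (mu0^-1 `^ (p^-1 - q^-1))%:E * lpnorm mu p%:E f)%E.
Proof.
move=> ppq; have /andP[p0 pq] := ppq; have q0 : 0 < q by exact: lt_le_trans pq.
have C0 : 0 < mu0^-1 `^ (p^-1 - q^-1) by rewrite powR_gt0 ?invr_gt0.
rewrite !lpnormE; case fs: (psum p f) => [s| |]; last first.
- by have := psum_ge0 p f; rewrite fs.
- by rewrite poweRyr ?invr_neq0 ?gt_eqF // gt0_muley ?leey ?lte_fin.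
have s0 : 0 <= s by have := psum_ge0 p f; rewrite fs lee_fin.
set c := mu0^-1 `^ p^-1; set t := s `^ p^-1.
have f_le x : `|f x| <= c * t.
  by rewrite -powRM ?invr_ge0 ?(ltW mu0_gt0) //; exact: le_powRV_psum p0 fs.
have := psum_le_sup_powR ppq f_le; rewrite fs -EFinM.
have s_eq : s = t `^ p by rewrite /t -powRrM mulVf ?gt_eqF ?powRr1.
case: (psum q f) (psum_ge0 q f) => [sq| |] //=.
rewrite -EFinM !lee_fin -/t s_eq => sq0 hq.
apply: le_trans (ge0_ler_powR _ _ _ hq) _;
  rewrite ?nnegrE ?invr_ge0 ?mulr_ge0 ?powR_ge0 ?(ltW q0) //.
rewrite powR_interp ?powR_ge0 ?ppq // /c -powRrM mulrBr mulr1 mulKf ?gt_eqF //.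
Qed.

Lemma lpnorm_infty_le_unif (P : \bar R) f : [set: V] !=set0 -> (1 <= P)%E ->
  (lpnorm mu +oo f <= (1 + mu0^-1)%:E * lpnorm mu P f)%E.
Proof.
move=> V0; have mu0V_ge0 : 0 <= mu0^-1 by rewrite invr_ge0 ltW.
case: P => [p| |] //; rewrite ?lee_fin => p1.
- have p0 : 0 < p by exact: lt_le_trans p1.
  apply: le_trans (lpnorm_infty_le _ p0) _.
  apply: lee_wpmul2r; first exact: lpnorm_ge0.
  by rewrite lee_fin powR_le1D // invr_ge0 (ltW p0) invf_le1.
- by apply: lee_pemull; [exact: lpnorm_ge0 | rewrite lee_fin lerDl].
Qed.
End LpNorm.

Section Graph.
Variables (R : realType) (V : choiceType) (adj : V -> V -> Prop)
  (w : V -> V -> R) (mu : V -> R).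

Lemma weighted_graph_nonempty : weighted_graph adj w mu -> [set: V] !=set0.
Proof. by case=> _ [_ [_ [/infinite_setN0]]]. Qed.

Lemma lpnorm_le_sobnorm m (P : 'I_m.+1 -> \bar R) u j : [set: V] !=set0 ->
  (lpnorm mu (P j) (gnabla adj w mu j u) <= sobnorm adj w mu P u)%E.
Proof.
move=> V0; rewrite /sobnorm (bigD1 j) //=.
by apply: leeDl; apply: sume_ge0 => i _; exact: lpnorm_ge0.
Qed.
End Graph.

Theorem theorem1p5 (R : realType) (mu0 : R) (hmu0 : 0 < mu0) :
  (* Part 1: C depends only on mu0 and P *)
  (forall (m : nat) (P : 'I_m.+1 -> \bar R),
     (1 <= m)%N -> (forall j, 1%E <= P j)%E ->
     exists C : R,
       forall (V : choiceType) (adj : V -> V -> Prop) (w : V -> V -> R) (mu : V -> R),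
         weighted_graph adj w mu -> (forall x, mu0 <= mu x) ->
         forall u : V -> R, (sobnorm adj w mu P u < +oo)%E ->
           forall j : 'I_m.+1,
             (lpnorm mu +oo (gnabla adj w mu j u) <= C%:E * sobnorm adj w mu P u)%E)
  /\
  (* Part 2: C depends only on mu0, p_j and q *)
  (forall p q : R, 1 <= p -> p <= q ->
     exists C : R,
       forall (m : nat) (P : 'I_m.+1 -> \bar R) (j : 'I_m.+1),
         (1 <= m)%N -> (forall i, 1%E <= P i)%E -> P j = p%:E ->
         forall (V : choiceType) (adj : V -> V -> Prop) (w : V -> V -> R) (mu : V -> R),
           weighted_graph adj w mu -> (forall x, mu0 <= mu x) ->
           forall u : V -> R, (sobnorm adj w mu P u < +oo)%E ->
             (lpnorm mu q%:E (gnabla adj w mu j u) <= C%:E * sobnorm adj w mu P u)%E).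
Proof.
split.
- move=> m P _ P_ge1; exists (1 + mu0^-1) => V adj w mu G mu0_le u _ j.
  have V0 := weighted_graph_nonempty G.
  apply: le_trans (lpnorm_infty_le_unif hmu0 mu0_le _ V0 (P_ge1 j)) _.
  apply: lee_wpmul2l; last exact: lpnorm_le_sobnorm.
  by rewrite lee_fin addr_ge0 // invr_ge0 ltW.
- move=> p q p1 pq; exists (mu0^-1 `^ (p^-1 - q^-1)).
  move=> m P j _ _ Pj V adj w mu G mu0_le u _.
  have ppq : 0 < p <= q by rewrite pq andbT (lt_le_trans _ p1).
  apply: le_trans (lpnorm_le_lpnorm hmu0 mu0_le _ ppq) _.
  rewrite -Pj; apply: lee_wpmul2l; first by rewrite lee_fin powR_ge0.
  exact/lpnorm_le_sobnorm/weighted_graph_nonempty/G.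
Qed.
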